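(* Let $\mathcal{G}=(V,E_1,\dots,E_T)$ be an always connected broadcast network with $n=|V|$ vertices, and let $\delta=\min_{v\in V}\Delta(v)$. Then $\mathcal{G}$ can be explored in $(\delta+1)(2n-3)$ timesteps, i.e. there is a temporal walk exploring $\mathcal{G}$ of length at most $(\delta+1)(2n-3)$.
   Context: A directed temporal graph $\mathcal{G}=(V,E_1,\dots,E_T)$ consists of a finite vertex set $V$ and an ordered sequence of sets $E_1,\dots,E_T$ of directed edges on $V$ (timesteps); $T$ is the lifetime; an edge $e$ is active at $t$ if $e\in E_t$; the underlying graph is $U(\mathcal{G})=(V,\bigcup_t E_t)$, assumed symmetric. $N(v)=\{u:(v,u)$ is an edge of $U(\mathcal{G})\}$ and $\Delta(v)=|N(v)|$. Write $[i,j]=\{i,\dots,j\}$. Such a $\mathcal{G}$ is a broadcast network if: (1) for every $v\in V$ and $t$, either all out-edges $\{(v,u):u\in N(v)\}$ belong to $E_t$ or none does; say $v$ is active at $t$ in the former case; (2) for all $t_1<t_2$, $v$ can be active at both $t_1$ and $t_2$ only if every $u\in N(v)$ is active at some timestep in $[t_1,t_2-1]$. It is always connected if each static graph $(V,E_t)$, $t\in[1,T]$, is connected. A temporal walk is a sequence $((v_{i_1},v_{i_2}),t_1),\dots,((v_{i_{m-1}},v_{i_m}),t_{m-1})$ of directed edges traversed in their orientation forming a walk in $U(\mathcal{G})$, each edge $(v_{i_j},v_{i_{j+1}})$ active at timestep $t_j$, with $t_1<\dots<t_{m-1}$; its length is $t_{m-1}$; it explores $\mathcal{G}$ if every vertex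 belongs to some edge of the walk. *)

From mathcomp Require Import all_boot.
Set Implicit Arguments. Unset Strict Implicit. Unset Printing Implicit Defensive.

Section TemporalGraphs.
Variable V : finType.

(* A directed temporal graph with lifetime T: timestep t (1 <= t <= T)
   has edge set [E t]; values of E outside [1,T] are irrelevant. *)

Definition uedge (T : nat) (E : nat -> rel V) (u v : V) : bool :=
  has (fun t => E t u v) (iota 1 T).

Definition nbhd (T : nat) (E : nat -> rel V) (v : V) : {set V} :=
  [set u | uedge T E v u].
Definition deg (T : nat) (E : nat -> rel V) (v : V) : nat := #|nbhd T E v|.

Definition no_loops (T : nat) (E : nat -> rel V) : Prop :=
  forall t v, 1 <= t <= T -> ~~ E t v v.

Definition underlying_symmetric (T : nat) (E : nat -> rel V) : Prop :=
  forall u v, uedge T E u v -> uedge T E v u.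

Definition active (T : nat) (E : nat -> rel V) (v : V) (t : nat) : bool :=
  [forall u in nbhd T E v, E t v u].

Definition broadcast_network (T : nat) (E : nat -> rel V) : Prop :=
  (forall v t, 1 <= t <= T ->
     active T E v t \/ (forall u, u \in nbhd T E v -> ~~ E t v u)) /\
  (forall v t1 t2, 1 <= t1 -> t1 < t2 -> t2 <= T ->
     active T E v t1 -> active T E v t2 ->
     forall u, u \in nbhd T E v ->
       exists2 t, t1 <= t <= t2.-1 & active T E u t).

Definition always_connected (T : nat) (E : nat -> rel V) : Prop :=
  forall t, 1 <= t <= T ->
    forall u v, connect (fun x y => E t x y || E t y x) u v.

(* A temporal walk starting at vertex x, given as the list of steps
   (next vertex, timestep), with strictly increasing timesteps in [1,T]
   (the previous time starts at 0) and each edge active at its time. *)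
Fixpoint temporal_walk (T : nat) (E : nat -> rel V) (x : V) (t0 : nat)
    (s : seq (V * nat)) : bool :=
  match s with
  | [::] => true
  | (y, t) :: s' => [&& t0 < t, t <= T, E t x y & temporal_walk T E y t s']
  end.

Definition walk_length (s : seq (V * nat)) : nat := last 0 (map snd s).

Definition explores (x : V) (s : seq (V * nat)) : bool :=
  (s != [::]) && [forall v, v \in x :: map fst s].

End TemporalGraphs.

From mathcomp Require Import all_boot zify.
Set Implicit Arguments. Unset Strict Implicit. Unset Printing Implicit Defensive.

(* Let [activations v t] count the activations of v in [1, t]. By property (2)
   of broadcast networks a neighbour of u activates between any two
   activations of u, so [activations] grows by at most one along an edge of
   the underlying graph.  A vertex w of minimum degree δ activates in every
   window of δ + 1 steps: while w is idle, connectivity forces one of its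
   neighbours to be active, and no neighbour is active twice without w acting
   in between.  So w has 2n - 3 activations by time t = (δ+1)(2n-3).
   Growing a spanning walk w = v_0, ..., v_m by detours and extensions keeps a
   potential invariant guaranteeing that v_i has at least i + 1 activations by
   time t; the walk is then realised by leaving v_i at its (i+1)-th
   activation, which comes after the arrival at v_i by the Lipschitz bound. *)

Lemma path_crossing_edge (V : eqType) (e : rel V) (S : {pred V}) x p :
  x \in S -> last x p \notin S -> path e x p ->
  exists q r, [/\ q \in S, r \notin S & e q r].
Proof.
elim: p x => [|y p IH] x /= xS; first by rewrite xS.
move=> lastS /andP [exy pth]; have [yS | yS] := boolP (y \in S).
- exact: IH yS lastS pth.
- by exists x, y.
Qed.

Section SpanningWalk.
Variables (V : finType) (adj : rel V) (f : V -> nat) (w : V).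
Hypothesis adj_sym : symmetric adj.
Hypothesis f_lipschitz : forall x y, adj x y -> f y <= f x + 1.
Hypothesis adj_connected : forall x, connect adj w x.

Definition walk_vertices (p : seq V) (e : V) : {set V} := [set x in w :: rcons p e].

(* [w :: p] followed by the pending step to [e].  The potential
   [2 #|walk_vertices p e| + f (last w p) - size p] never decreases: a detour
   [q r q] costs two steps for one new vertex, an extension costs one step for
   one new vertex and lowers [f] at the end by at most one. *)
Definition good_walk (p : seq V) (e : V) : Prop :=
  path adj w (rcons p e) /\
  size p + 4 + f w <= 2 * #|walk_vertices p e| + f (last w p).

Lemma card_walk_vertices_add p e p' e' r : r \notin walk_vertices p e ->
  w :: rcons p' e' =i r :: w :: rcons p e ->
  #|walk_vertices p' e'| = #|walk_vertices p e|.+1.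
Proof.
move=> rS eq_walk; have -> : walk_vertices p' e' = r |: walk_vertices p e.
  by apply/setP => x; rewrite in_setU1 !inE -in_cons -in_cons eq_walk.
by rewrite cardsU1 rS.
Qed.

Lemma good_walk_detour p e q r : good_walk p e -> q \in w :: p -> adj q r ->
  r \notin walk_vertices p e ->
  exists p', good_walk p' e /\ #|walk_vertices p' e| = #|walk_vertices p e|.+1.
Proof.
move=> [pth hf] qp aqr rS; case/splitPl: qp pth hf rS => p1 p2 q_last pth hf rS.
have q_in : q \in w :: p1 by rewrite -q_last mem_last.
have card_add :
    #|walk_vertices (p1 ++ r :: q :: p2) e| = #|walk_vertices (p1 ++ p2) e|.+1.
  apply: card_walk_vertices_add rS _ => x.
  rewrite !(inE, mem_rcons, mem_cat) /=.
  have [-> | _] := eqVneq x q; last by case: (x == r); rewrite ?orbT.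
  by rewrite !orbT; move: q_in; rewrite inE => /orP [] ->; rewrite ?orbT.
exists (p1 ++ r :: q :: p2); split=> //; split.
- move: pth; rewrite !rcons_cat !cat_path /= q_last => /andP [-> ->].
  by rewrite aqr adj_sym aqr.
- move: hf; rewrite card_add !last_cat /= q_last !size_cat /=; lia.
Qed.

Lemma good_walk_extend p e r : good_walk p e -> adj e r ->
  r \notin walk_vertices p e ->
  good_walk (rcons p e) r /\ #|walk_vertices (rcons p e) r| = #|walk_vertices p e|.+1.
Proof.
move=> [pth hf] aer rS.
have card_add : #|walk_vertices (rcons p e) r| = #|walk_vertices p e|.+1.
  by apply: card_walk_vertices_add rS _ => x; rewrite !(inE, mem_rcons) orbCA.
split=> //; split; first by rewrite rcons_path pth last_rcons.
move: hf; rewrite card_add last_rcons size_rcons.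
have f_last : f (last w p) <= f e + 1.
  by apply: f_lipschitz; move: pth; rewrite rcons_path adj_sym => /andP [].
lia.
Qed.

Lemma good_walk_grow p e x : good_walk p e -> x \notin walk_vertices p e ->
  exists p' e', good_walk p' e' /\ #|walk_vertices p' e'| = #|walk_vertices p e|.+1.
Proof.
move=> gw xS.
have w_in : w \in walk_vertices p e by rewrite inE mem_head.
have /connectP [s pth x_last] := adj_connected x; rewrite x_last in xS.
have [q [r [qS rS aqr]]] := path_crossing_edge w_in xS pth.
move: qS; rewrite inE -rcons_cons mem_rcons inE => /orP [/eqP qe | qp].
- exists (rcons p e), r; apply: good_walk_extend => //; by rewrite -qe.
- by have [p' ?] := good_walk_detour gw qp aqr rS; exists p', e.
Qed.

Lemma good_walk_start : 1 < #|V| -> exists p e, good_walk p e.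
Proof.
move=> V_gt1; have /card_gt0P [x xw] : 0 < #|[set~ w]| by rewrite cardsC1; lia.
have /connectP [s pth x_last] := adj_connected x; rewrite x_last in_setC in xw.
have [q [r [/set1P -> rw awr]]] := path_crossing_edge (set11 w) xw pth.
exists [::], r; split; first by rewrite /= awr.
have -> : walk_vertices [::] r = [set w; r] by apply/setP => y; rewrite !inE.
by rewrite cards2 eq_sym; move: rw; rewrite !inE => ->.
Qed.

Lemma good_walk_spanning p e : good_walk p e ->
  exists p' e', good_walk p' e' /\ walk_vertices p' e' = setT.
Proof.
move Hn: #|~: walk_vertices p e| => n; elim: n p e Hn => [|n IH] p e Hn gw.
  by exists p, e; split; rewrite // -[walk_vertices p e]setCK (cards0_eq Hn) setC0.
have /card_gt0P [x] : 0 < #|~: walk_vertices p e| by rewrite Hn.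
rewrite inE => /(good_walk_grow gw) [p' [e' [gw' card']]].
apply: (IH p' e') gw'.
by move: (cardsC (walk_vertices p e)) (cardsC (walk_vertices p' e')); lia.
Qed.

Lemma spanning_walk : 1 < #|V| ->
  exists p e, [/\ path adj w (rcons p e), (forall x, x \in w :: rcons p e) &
    size p + 4 + f w <= 2 * #|V| + f (last w p)].
Proof.
move=> /good_walk_start [? [? /good_walk_spanning [p [e [[pth hf] span]]]]].
exists p, e; split => //.
- by move=> x; have := in_setT x; rewrite -span inE.
- by rewrite span cardsT in hf.
Qed.

End SpanningWalk.

Section BroadcastNetwork.
Variables (V : finType) (T : nat) (E : nat -> rel V).
Hypothesis E_sym : underlying_symmetric T E.
Hypothesis E_broadcast : broadcast_network T E.
Hypothesis E_connected : always_connected T E.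

Definition activations (v : V) (t : nat) : nat := count (active T E v) (iota 1 t).

Lemma activationsS v t : activations v t.+1 = activations v t + active T E v t.+1.
Proof. by rewrite /activations -[t.+1]addn1 iotaD count_cat /= addn0 [1 + t]addnC. Qed.

Lemma activations_mono v : {homo activations v : s t / s <= t}.
Proof.
move=> s t /subnK <-; elim: (t - s) => [|k IH] //.
by rewrite addSn activationsS (leq_trans IH) ?leq_addr.
Qed.

Lemma activations_active_lt v r t : 0 < r <= t -> active T E v r ->
  activations v r.-1 < activations v t.
Proof.
case: r => [|r] // /andP [_ rt] vr /=.
by apply: leq_trans (activations_mono v rt); rewrite activationsS vr addn1.
Qed.

Lemma last_activation v t : 0 < activations v t ->
  exists s, [/\ 0 < s <= t, active T E v s & activations v s = activations v t].
Proof.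
elim: t => [|t IH] //; have [vt _ | vt] := boolP (active T E v t.+1).
  by exists t.+1; rewrite leqnn.
rewrite activationsS (negPf vt) addn0 => /IH [s [/andP [s_gt0 st] vs cs]].
by exists s; rewrite s_gt0 (leq_trans st).
Qed.

Lemma first_activation v t0 t k : activations v t0 < k -> k <= activations v t ->
  exists tau, [/\ t0 < tau <= t, active T E v tau & activations v tau.-1 < k].
Proof.
move=> t0k; elim: t => [|t IH]; first by move: t0k; rewrite /activations /=; lia.
have [kt _ | tk] := leqP k (activations v t).
  by have [tau [/andP [t0tau taut] ? ?]] := IH kt; exists tau; rewrite t0tau ltnW.
rewrite activationsS; case: (boolP (active T E v t.+1)) => vt /= kt; last by lia.
exists t.+1; split => //; rewrite leqnn andbT ltnS.
by case: leqP => // /(activations_mono v); rewrite activationsS vt; lia.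
Qed.

Lemma uedge_sym : symmetric (uedge T E).
Proof. by move=> x y; apply/idP/idP; apply: E_sym. Qed.

Lemma uedge_of_E t x y : 0 < t <= T -> E t x y -> uedge T E x y.
Proof. by move=> tT Exy; apply/hasP; exists t; rewrite // mem_iota add1n ltnS. Qed.

Lemma uedge_connected : 0 < T -> forall x y, connect (uedge T E) x y.
Proof.
move=> T_gt0 x y; have T1 : 0 < 1 <= T by [].
apply: connect_sub (E_connected T1 x y) => u v /orP [] Euv; apply: connect1.
- exact: uedge_of_E T1 Euv.
- by rewrite uedge_sym (uedge_of_E T1 Euv).
Qed.

Lemma activations_nbhd u v t : v \in nbhd T E u -> t <= T ->
  activations u t <= activations v t.-1 + 1.
Proof.
move=> uv; elim/ltn_ind: t => -[|t] IH tT //=.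
rewrite activationsS; have [ut | ut] := boolP (active T E u t.+1); last first.
  rewrite addn0; apply: leq_trans (IH t (ltnSn t) (ltnW tT)) _.
  by rewrite leq_add2r activations_mono ?leq_pred.
have [-> | /last_activation [s [/andP [s_gt0 st] us <-]]] := posnP (activations u t).
  by rewrite leq_add2r.
have st1 : s < t.+1 by rewrite ltnS.
have [r /andP [sr rt] vr] := E_broadcast.2 u s t.+1 s_gt0 st1 tT us ut v uv.
have := IH s st1 (leq_trans st (ltnW tT)).
have := activations_active_lt (_ : 0 < r <= t) vr.
have := activations_mono v (_ : s.-1 <= r.-1).
rewrite /= in rt; lia.
Qed.

Lemma activations_uedge x y t : uedge T E x y -> t <= T ->
  activations y t <= activations x t.-1 + 1.
Proof. by rewrite uedge_sym => yx; apply: activations_nbhd; rewrite inE. Qed.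

Lemma activations_uedgeW x y t : uedge T E x y -> t <= T ->
  activations y t <= activations x t + 1.
Proof.
move=> xy tT; apply: leq_trans (activations_uedge xy tT) _.
by rewrite leq_add2r activations_mono ?leq_pred.
Qed.

Lemma nbhd_active_of_inactive w t : 1 < #|V| -> 0 < t <= T -> ~~ active T E w t ->
  exists2 u, u \in nbhd T E w & active T E u t.
Proof.
move=> V_gt1 tT w_off.
have /card_gt0P [z] : 0 < #|[set~ w]| by rewrite cardsC1; lia.
rewrite in_setC1 => zw; have /connectP [[|y p] /= pth z_last] := E_connected tT w z.
  by rewrite z_last eqxx in zw.
case/andP: pth => /orP [] Ewy _.
- have wy : y \in nbhd T E w by rewrite inE (uedge_of_E tT Ewy).
  by case: (E_broadcast.1 w t tT) => [w_on | /(_ y wy)]; rewrite ?Ewy ?w_on in w_off *.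
- have yw : w \in nbhd T E y by rewrite inE (uedge_of_E tT Ewy).
  exists y; first by rewrite inE uedge_sym -inE.
  by case: (E_broadcast.1 y t tT) => // /(_ w yw); rewrite Ewy.
Qed.

Lemma active_in_window w a : 1 < #|V| -> a + (deg T E w).+1 <= T ->
  exists2 s, a < s <= a + (deg T E w).+1 & active T E w s.
Proof.
set d := deg T E w => V_gt1 aT.
have [/hasP [s] | /hasPn w_off] := boolP (has (active T E w) (iota a.+1 d.+1)).
  by rewrite mem_iota; exists s => //; lia.
have /fin_all_exists2 [g g_nbhd g_on] : forall i : 'I_d.+1,
    exists2 u, u \in nbhd T E w & active T E u (a + i.+1).
  move=> i; have := ltn_ord i => id.
  by apply: nbhd_active_of_inactive => //; [lia | apply: w_off; rewrite mem_iota; lia].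
have g_neq (i j : 'I_d.+1) : i < j -> g i != g j.
  move=> ij; apply/eqP => gij; have := ltn_ord j => jd.
  have gi_on_j : active T E (g i) (a + j.+1) by rewrite gij.
  have w_nbhd : w \in nbhd T E (g i) by move: (g_nbhd i); rewrite !inE uedge_sym.
  have [||| r /andP [ir rj]] := E_broadcast.2 (g i) (a + i.+1) (a + j.+1)
    _ _ _ (g_on i) gi_on_j w w_nbhd; [lia | lia | lia |].
  by apply/negP; apply: w_off; rewrite mem_iota; lia.
have g_inj : injective g.
  move=> i j gij; case: (ltngtP i j) => [ij | ji | /val_inj //].
  - by have := g_neq i j ij; rewrite gij eqxx.
  - by have := g_neq j i ji; rewrite gij eqxx.
have : #|g @: [set: 'I_d.+1]| <= d.
  by apply: subset_leq_card; apply/subsetP => _ /imsetP [i _ ->].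
by rewrite card_imset // cardsT card_ord ltnn.
Qed.

Lemma windows_le_activations w j : 1 < #|V| -> j * (deg T E w).+1 <= T ->
  j <= activations w (j * (deg T E w).+1).
Proof.
move=> V_gt1; elim: j => [|j IH] // jT; rewrite mulSn addnC in jT *.
have [s /andP [js sj] ws] := active_in_window V_gt1 jT.
have := IH (leq_trans (leq_addr _ _) jT).
have := activations_active_lt (_ : 0 < s <= j * (deg T E w).+1 + (deg T E w).+1) ws.
have := activations_mono w (_ : j * (deg T E w).+1 <= s.-1).
lia.
Qed.

Lemma temporal_step x y t0 t k : t <= T -> uedge T E x y ->
  activations x t0 < k -> k <= activations x t ->
  exists tau, [/\ t0 < tau <= t, E tau x y & activations y tau <= k].
Proof.
move=> tT xy xk kx.
have [tau [/andP [t0tau taut] x_on x_before]] := first_activation xk kx.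
exists tau; split; first by rewrite t0tau.
- by move/forall_inP: x_on; apply; rewrite inE.
- by have := activations_uedge xy (leq_trans taut tT); lia.
Qed.

Lemma activations_path t x p : t <= T -> path (uedge T E) x p ->
  activations (last x p) t <= activations x t + size p.
Proof.
move=> tT; elim: p x => [|y p IH] x /=; first by rewrite addn0.
case/andP=> xy /IH; have := activations_uedgeW xy tT; lia.
Qed.

Lemma temporal_walk_along_path t p e x k t0 : t <= T ->
  path (uedge T E) x (rcons p e) -> activations x t0 < k ->
  k + size p <= activations (last x p) t ->
  exists s, [/\ temporal_walk T E x t0 s, map fst s = rcons p e &
    last t0 (map snd s) <= t].
Proof.
move=> tT; elim: p x k t0 => [|y p IH] x k t0 /=.
- move=> /andP [xe _] xk; rewrite addn0 => kt.
  have [tau [/andP [t0tau taut] Exe _]] := temporal_step tT xe xk kt.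
  by exists [:: (e, tau)]; rewrite /= t0tau Exe (leq_trans taut tT).
- case/andP=> xy pth xk kt.
  have kx : k <= activations x t.
    have yp : path (uedge T E) y p by move: pth; rewrite rcons_path => /andP [].
    have xyp : path (uedge T E) x (y :: p) by rewrite /= xy yp.
    by have := activations_path tT xyp; rewrite /=; lia.
  have [tau [/andP [t0tau taut] Exy yk]] := temporal_step tT xy xk kx.
  rewrite addnS -addSn in kt; have [s [ws ms ls]] := IH y k.+1 tau pth yk kt.
  by exists ((y, tau) :: s); rewrite /= t0tau Exy (leq_trans taut tT) ws ms.
Qed.

End BroadcastNetwork.

Theorem theorem17 (V : finType) (T : nat) (E : nat -> rel V) (delta : nat) :
  no_loops T E ->
  underlying_symmetric T E ->
  broadcast_network T E ->
  always_connected T E ->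
  2 <= #|V| ->
  (exists v : V, deg T E v = delta) ->
  (forall v : V, delta <= deg T E v) ->
  (delta + 1) * (2 * #|V| - 3) <= T ->
  exists (x : V) (s : seq (V * nat)),
    [&& temporal_walk T E x 0 s, explores x s &
        walk_length s <= (delta + 1) * (2 * #|V| - 3)].
Proof.
move=> _ E_sym E_broadcast E_connected V_gt1 [w deg_w] _.
set t := (delta + 1) * (2 * #|V| - 3) => tT.
have T_gt0 : 0 < T by apply: leq_trans tT; rewrite muln_gt0; lia.
have w_on : 2 * #|V| - 3 <= activations T E w t.
  have t_eq : t = (2 * #|V| - 3) * (deg T E w).+1 by rewrite /t deg_w addn1 mulnC.
  by rewrite t_eq; apply: windows_le_activations; rewrite // -t_eq.
have [p [e [pth covers size_p]]] := spanning_walk (uedge_sym E_sym)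
  (fun x y xy => activations_uedgeW E_sym E_broadcast xy tT)
  (uedge_connected E_sym E_connected T_gt0 w) V_gt1.
have last_on : 1 + size p <= activations T E (last w p) t by lia.
have [s [ws ms ls]] := temporal_walk_along_path E_sym E_broadcast tT pth
  (isT : activations T E w 0 < 1) last_on.
exists w, s; rewrite ws ls andbT /explores -size_eq0 -(size_map fst) ms size_rcons /=.
exact/forallP.
Qed.
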